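(* Let $H\sim\mathcal{N}(0,\Sigma)$ be a random $M\times N$ matrix, and let $Q^{(1)},Q^{(2)}$ be two capacity-achieving covariance matrices (both maximizers of $C$ over $\{Q\ge0,\ \mathrm{tr}(Q)\le p\}$) with $\mathrm{tr}(Q^{(1)})=p=\mathrm{tr}(Q^{(2)})$. Then $HQ^{(1)}H^H=HQ^{(2)}H^H$ almost surely with respect to the law of $H$.
   Context: Fix integers $M,N\ge1$, noise variance $\sigma_n^2>0$ and power $p>0$. We identify $\mathbb{M}(M,\mathbb{C})\otimes\mathbb{M}(N,\mathbb{C})$ with $\mathbb{M}(MN,\mathbb{C})$ via $(A\otimes B)_{(i,j),(l,m)}=A_{il}B_{jm}$. $H\sim\mathcal{N}(0,\Sigma)$ means: $H$ is a random $M\times N$ complex matrix whose entries are jointly zero-mean circularly symmetric complex Gaussian, with covariance $\Sigma_{(i,j),(l,m)}=\mathcal{E}(H_{ij}\overline{H_{lm}})$. For positive semidefinite $Q\in\mathbb{M}(N,\mathbb{C})$, $C(Q):=\mathcal{E}\big(\log\det(\mathbf{1}_M+\sigma_n^{-2}HQH^H)\big)$. *)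

From HB Require Import structures.
From mathcomp Require Import all_boot all_order all_algebra.
From mathcomp Require Import complex.
From mathcomp Require Import all_classical all_reals all_analysis.
Set Implicit Arguments. Unset Strict Implicit. Unset Printing Implicit Defensive.
Import Order.TTheory GRing.Theory Num.Theory.
Local Open Scope classical_set_scope.
Local Open Scope ring_scope.
Local Open Scope complex_scope.

Definition adjmx {C : numClosedFieldType} m n (A : 'M[C]_(m, n)) : 'M[C]_(n, m) :=
  map_mx Num.conj A^T.

Definition psdmx {C : numClosedFieldType} n (Q : 'M[C]_n) : Prop :=
  Q = adjmx Q /\ forall v : 'rV[C]_n, 0 <= (v *m Q *m adjmx v) 0 0.

Section Gaussian.
Context {R : realType} {d : measure_display} {T : measurableType d}.
Variable P : probability T R.

(* a real random variable Y is a centered (possibly degenerate) Gaussian: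
   either Y = 0 a.s. (variance 0), or its law is N(0, s^2) with s != 0 *)
Definition centered_gaussian (Y : T -> R) : Prop :=
  measurable_fun setT Y /\
  exists s : R,
    if s == 0 then {ae P, forall w, Y w = 0}
    else forall A : set R, measurable A ->
           P (Y @^-1` A) = normal_prob 0 s A.

Definition cexpect_is (X : T -> R[i]) (z : R[i]) : Prop :=
  [/\ P.-integrable setT (EFin \o (fun w => complex.Re (X w))),
      P.-integrable setT (EFin \o (fun w => complex.Im (X w))),
      ('E_P[fun w => complex.Re (X w)] = (complex.Re z)%:E)%E &
      ('E_P[fun w => complex.Im (X w)] = (complex.Im z)%:E)%E].

(* H ~ N(0, Sigma): entries jointly Gaussian (every real linear combination
   of the real and imaginary parts is a centered Gaussian), circularly
   symmetric (zero pseudo-covariance E[H_ij H_lm] = 0) and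
   E[H_ij conj(H_lm)] = Sigma_{(i,j),(l,m)}, with (i,j) indexed by
   mxvec_index i j (row-major, as in the Kronecker identification). *)
Definition cgaussian_mx M N (H : T -> 'M[R[i]]_(M, N))
    (Sigma : 'M[R[i]]_(M * N)) : Prop :=
  [/\ forall i j, measurable_fun setT (fun w => complex.Re (H w i j)),
      forall i j, measurable_fun setT (fun w => complex.Im (H w i j)),
      forall a b : 'M[R]_(M, N),
        centered_gaussian (fun w => \sum_i \sum_j
          (a i j * complex.Re (H w i j) + b i j * complex.Im (H w i j))),
      forall i j l m, cexpect_is (fun w => H w i j * H w l m) 0 &
      forall i j l m, cexpect_is (fun w => H w i j * Num.conj (H w l m))
                                 (Sigma (mxvec_index i j) (mxvec_index l m))].

(* ergodic capacity C(Q) = E[ log det (1_M + sigma2^-1 H Q H^H) ]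
   (the determinant is real >= 1; we take the log of its real part) *)
Definition capacity M N (H : T -> 'M[R[i]]_(M, N)) (sigma2 : R)
    (Q : 'M[R[i]]_N) : \bar R :=
  'E_P[fun w => ln (complex.Re
     (\det (1%:M + (sigma2^-1)%:C *: (H w *m Q *m adjmx (H w)))))].

Definition capacity_achieving M N (H : T -> 'M[R[i]]_(M, N)) (sigma2 p : R)
    (Q : 'M[R[i]]_N) : Prop :=
  [/\ psdmx Q, \tr Q <= p%:C &
      forall Q' : 'M[R[i]]_N, psdmx Q' -> \tr Q' <= p%:C ->
        (capacity H sigma2 Q' <= capacity H sigma2 Q)%E].

End Gaussian.

(* Write c := sigma2^-1, X_Q := H Q H^H and lndet c X := ln det (1 + c X), so that
   C(Q) = E[lndet c X_Q].  For positive semidefinite X1, X2, whitening 1 + c X1 to the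
   identity and diagonalising the image of 1 + c X2 (eigenvalues l_i) reduces midpoint
   concavity of lndet c to prod l_i <= (prod (1 + l_i)/2)^2, with equality only when
   every l_i = 1, i.e. when X1 = X2.  The midpoint Q of Q1 and Q2 is feasible and X_Q is
   the midpoint of X_Q1 and X_Q2, so the nonnegative gap 2 lndet X_Q - lndet X_Q1 -
   lndet X_Q2 has expectation 2 C(Q) - C(Q1) - C(Q2) <= 0 by optimality of Q1 and Q2;
   hence it vanishes almost surely. *)

From HB Require Import structures.
From mathcomp Require Import all_boot all_order all_algebra.
From mathcomp Require Import complex.
From mathcomp Require Import all_classical all_reals all_analysis.
From mathcomp Require Import ring lra measurable_realfun.
Set Implicit Arguments.
Unset Strict Implicit.
Unset Printing Implicit Defensive.
Import Order.TTheory GRing.Theory Num.Theory.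
Local Open Scope classical_set_scope.
Local Open Scope ring_scope.
Local Open Scope complex_scope.
Local Open Scope sesquilinear_scope.

Section PsdMatrices.
Context {C : numClosedFieldType}.

Lemma adjmx_mul m n p (A : 'M[C]_(m, n)) (B : 'M[C]_(n, p)) :
  (A *m B)^t* = B^t* *m A^t*.
Proof. by rewrite trmx_mul map_mxM. Qed.

Lemma unitarymx_adjK n (U : 'M[C]_n) : U \is unitarymx -> U^t* *m U = 1%:M.
Proof. by move=> Uu; rewrite -invmx_unitary // mulVmx // unitarymx_unit. Qed.

Lemma psdmx1 n : psdmx (1%:M : 'M[C]_n).
Proof.
split=> [|v]; first by rewrite /adjmx trmx1 map_mx1.
rewrite mulmx1 mxE; apply: sumr_ge0 => j _; rewrite !mxE; exact: mul_conjC_ge0.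
Qed.

Lemma psdmxD n (A B : 'M[C]_n) : psdmx A -> psdmx B -> psdmx (A + B).
Proof.
move=> [Ah Ap] [Bh Bp]; split=> [|v].
  by rewrite /adjmx linearD /= map_mxD -!/(adjmx _) -Ah -Bh.
by rewrite mulmxDr mulmxDl mxE addr_ge0.
Qed.

Lemma psdmxZ n (a : C) (A : 'M[C]_n) : 0 <= a -> psdmx A -> psdmx (a *: A).
Proof.
move=> a0 [Ah Ap]; split=> [|v].
  by rewrite /adjmx linearZ /= map_mxZ -/(adjmx _) -Ah /= conj_Creal // ger0_real.
by rewrite -scalemxAr -scalemxAl mxE mulr_ge0.
Qed.

Lemma psdmx_congr m n (X : 'M[C]_(m, n)) (Q : 'M[C]_n) :
  psdmx Q -> psdmx (X *m Q *m adjmx X).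
Proof.
move=> [Qh Qp]; split=> [|v].
  by rewrite /adjmx !adjmx_mul trmxCK -/(adjmx Q) -Qh mulmxA.
by have := Qp (v *m X); rewrite /adjmx adjmx_mul !mulmxA.
Qed.

Lemma psdmx_spectral n (A : 'M[C]_n) : psdmx A ->
  exists2 U : 'M[C]_n, U \is unitarymx &
  exists2 d : 'rV[C]_n, (forall i, 0 <= d 0 i) & A = U^t* *m diag_mx d *m U.
Proof.
move=> [Ah Apos].
have Aherm : A \is hermsymmx by apply/is_hermitianmxP; rewrite expr0 scale1r.
have /orthomx_spectralP := hermitian_normalmx Aherm.
set U := spectralmx A; set d := spectral_diag A => Ae.
have Uu : U \is unitarymx by apply: spectral_unitarymx.
rewrite invmx_unitary // in Ae; exists U => //; exists d => // i.
have := Apos (delta_mx 0 i *m U).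
rewrite /adjmx Ae adjmx_mul !mulmxA !mulmxtVK //.
rewrite mul_mx_diag !mxE (bigD1 i) //= big1 ?addr0.
  by rewrite !mxE !eqxx /= mul1r rmorph1 mulr1.
by move=> j /negbTE ji; rewrite !mxE ji /= !mul0r.
Qed.

Lemma det_unitary_congr n (U X : 'M[C]_n) :
  U \is unitarymx -> \det (U^t* *m X *m U) = \det X.
Proof.
by move=> Uu; rewrite !det_mulmx mulrAC -det_mulmx unitarymx_adjK // det1 mul1r.
Qed.

Lemma det_congr n (S X : 'M[C]_n) :
  \det (S *m X *m S^t*) = \det S * (\det S)^* * \det X.
Proof. by rewrite !det_mulmx det_map_mx det_tr mulrAC. Qed.

Lemma det_congr_normalized n (S B X : 'M[C]_n) :
  S *m B *m S^t* = 1%:M -> \det X = \det (S *m X *m S^t*) * \det B.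
Proof.
move=> SB1; have := congr1 determinant SB1.
by rewrite det1 !det_congr => SB; rewrite mulrAC SB mul1r.
Qed.

Lemma congr_normalized_inj n (S B X Y : 'M[C]_n) : S *m B *m S^t* = 1%:M ->
  S *m X *m S^t* = S *m Y *m S^t* -> X = Y.
Proof.
move=> SB1 XY.
have dS : \det S != 0.
  apply/eqP => dS0; move: (congr1 determinant SB1).
  by rewrite det_congr dS0 !mul0r det1 => /eqP; rewrite eq_sym oner_eq0.
have Su : S \in unitmx by rewrite unitmxE unitfE.
have SHu : S^t* \in unitmx by rewrite unitmxE unitfE det_map_mx det_tr conjC_eq0.
have := congr1 (fun Z => invmx S *m Z *m invmx (S^t*)) XY => /=.
by rewrite !mulmxA !mulVmx // !mul1mx !(mulmxK SHu).
Qed.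

Lemma scalar_add_unitary_diag n (a b : C) (U : 'M[C]_n) (D : 'rV[C]_n) :
  U \is unitarymx ->
  a%:M + b *: (U^t* *m diag_mx D *m U) =
  U^t* *m diag_mx (\row_i (a + b * D 0 i)) *m U.
Proof.
move=> Uu; have -> : diag_mx (\row_i (a + b * D 0 i)) = a%:M + b *: diag_mx D.
  apply/matrixP => i j; rewrite !mxE.
  by case: eqP => [->|_]; rewrite ?mulr1n ?mulr0n ?add0r ?mulr0.
rewrite mulmxDr mulmxDl mul_mx_scalar -scalemxAl unitarymx_adjK // scalemx1.
by rewrite -scalemxAr -scalemxAl.
Qed.

Lemma mxtrace_congrE m n (X : 'M[C]_(m, n)) (Q : 'M[C]_n) :
  \tr (X *m Q *m adjmx X) =
  \sum_(i < m) \sum_(k < n) \sum_(j < n) Q j k * (X i j * Num.conj (X i k)).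
Proof.
apply: eq_bigr => i _; rewrite mxE; apply: eq_bigr => k _.
by rewrite !mxE big_distrl; apply: eq_bigr => j _; rewrite mulrCA mulrA.
Qed.

End PsdMatrices.

Section PsdComplexMatrices.
Context {R : realType}.

Local Notation diagC d := (diag_mx (\row_i (d i)%:C) : 'M[R[i]]_ _).

Lemma adjmx_diagC n (d : 'I_n -> R) : (diagC d)^t* = diagC d.
Proof.
rewrite tr_diag_mx map_diag_mx; congr diag_mx; apply/rowP => i.
by rewrite !mxE /=; exact: conjc_real.
Qed.

Lemma psdmx_spectral_real n (A : 'M[R[i]]_n) : psdmx A ->
  exists2 U : 'M[R[i]]_n, U \is unitarymx &
  exists2 d : 'I_n -> R, (forall i, 0 <= d i) & A = U^t* *m diagC d *m U.
Proof.
move=> /psdmx_spectral [U Uu [d d0 ->]]; exists U => //.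
exists (fun i => complex.Re (d 0 i)) => [i|].
  by have := d0 i; rewrite lecE => /andP[].
suff -> : \row_i (complex.Re (d 0 i))%:C = d by [].
by apply/rowP => i; rewrite mxE RRe_real // ger0_real.
Qed.

Lemma det_unitary_diagC n (U : 'M[R[i]]_n) (d : 'I_n -> R) :
  U \is unitarymx -> \det (U^t* *m diagC d *m U) = (\prod_i d i)%:C.
Proof.
move=> Uu; rewrite det_unitary_congr // det_diag rmorph_prod.
by apply: eq_bigr => i _; rewrite mxE.
Qed.

Lemma tr_unitary_diagC n (U : 'M[R[i]]_n) (d : 'I_n -> R) :
  U \is unitarymx -> \tr (U^t* *m diagC d *m U) = (\sum_i d i)%:C.
Proof.
move=> /unitarymxP UU; rewrite mxtrace_mulC mulmxA UU mul1mx mxtrace_diag.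
by rewrite rmorph_sum; apply: eq_bigr => i _; rewrite mxE.
Qed.

Lemma scalar_add_unitary_diagC n (a b : R) (U : 'M[R[i]]_n) (d : 'I_n -> R) :
  U \is unitarymx ->
  a%:C%:M + b%:C *: (U^t* *m diagC d *m U) =
  U^t* *m diagC (fun i => a + b * d i) *m U.
Proof.
move=> Uu; rewrite (@scalar_add_unitary_diag _ _ a%:C b%:C U (\row_i (d i)%:C) Uu).
have -> : \row_i (a%:C + b%:C * (\row_i (d i)%:C) 0 i) = \row_i (a + b * d i)%:C.
  by apply/rowP => i; rewrite !mxE rmorphD rmorphM.
by [].
Qed.

Lemma one_add_unitary_diagC n (b : R) (U : 'M[R[i]]_n) (d : 'I_n -> R) :
  U \is unitarymx ->
  1%:M + b%:C *: (U^t* *m diagC d *m U) =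
  U^t* *m diagC (fun i => 1 + b * d i) *m U.
Proof. by move=> Uu; rewrite -scalar_add_unitary_diagC //; congr (_%:M + _). Qed.

Lemma psdmx_det_tr n (A : 'M[R[i]]_n) (c : R) : psdmx A ->
  exists2 d : 'I_n -> R, (forall i, 0 <= d i) &
    \det (1%:M + c%:C *: A) = (\prod_i (1 + c * d i))%:C /\ \tr A = (\sum_i d i)%:C.
Proof.
move=> /psdmx_spectral_real [U Uu [d d0 ->]]; exists d => //.
by rewrite one_add_unitary_diagC // det_unitary_diagC // tr_unitary_diagC.
Qed.

Lemma prod_one_add_ge1 n (c : R) (d : 'I_n -> R) :
  0 <= c -> (forall i, 0 <= d i) -> 1 <= \prod_i (1 + c * d i).
Proof.
move=> c0 d0; apply: (big_ind (fun x => 1 <= x)) => // [x y|i _].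
  exact: mulr_ege1.
by rewrite lerDl mulr_ge0.
Qed.

Lemma det_one_add_psdmx n (A : 'M[R[i]]_n) (c : R) : psdmx A -> 0 <= c ->
  exists2 s : R, 1 <= s & \det (1%:M + c%:C *: A) = s%:C.
Proof.
move=> pA c0; have [d d0 [-> _]] := psdmx_det_tr c pA.
by exists (\prod_i (1 + c * d i)) => //; apply: prod_one_add_ge1.
Qed.

Lemma psdmx_whiten n (A : 'M[R[i]]_n) (c : R) : psdmx A -> 0 <= c ->
  exists S : 'M[R[i]]_n, S *m (1%:M + c%:C *: A) *m S^t* = 1%:M.
Proof.
move=> /psdmx_spectral_real [U Uu [d d0 ->]] c0.
pose e i := 1 + c * d i; have e0 i : 0 < e i by rewrite ltr_pwDl // mulr_ge0.
exists (diagC (fun i => (Num.sqrt (e i))^-1) *m U).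
rewrite one_add_unitary_diagC // adjmx_mul adjmx_diagC !mulmxA !mulmxtVK //.
rewrite !mulmx_diag -diag_const_mx; congr diag_mx; apply/rowP => i.
rewrite !mxE -!rmorphM mulrAC -expr2 exprVn sqr_sqrtr ?ltW // mulVf //.
by rewrite gt_eqF.
Qed.

End PsdComplexMatrices.

Section LogDet.
Context {R : realType}.

Definition lndet n (c : R) (A : 'M[R[i]]_n) : R :=
  ln (complex.Re (\det (1%:M + c%:C *: A))).

Lemma lndet_ge0 n (A : 'M[R[i]]_n) (c : R) : psdmx A -> 0 <= c -> 0 <= lndet c A.
Proof.
move=> pA c0; rewrite /lndet.
by have [s s1 ->] := det_one_add_psdmx pA c0; apply: ln_ge0.
Qed.

Lemma lndet_le_tr n (A : 'M[R[i]]_n) (c : R) : psdmx A -> 0 <= c ->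
  lndet c A <= c * complex.Re (\tr A).
Proof.
move=> pA c0; have [d d0 [dA trA]] := psdmx_det_tr c pA.
rewrite /lndet dA trA /= -ler_expR lnK; last first.
  by rewrite posrE (lt_le_trans ltr01) // prod_one_add_ge1.
rewrite mulr_sumr expR_sum; apply: ler_prod => i _.
by rewrite expR_ge1Dx andbT (le_trans ler01) // lerDl mulr_ge0.
Qed.

Lemma eq_of_ler_prod n (a b : 'I_n -> R) :
  (forall i, 0 <= b i <= a i) -> 0 < \prod_i b i -> \prod_i a i = \prod_i b i ->
  forall i, a i = b i.
Proof.
move=> hab pb eq_ab j; apply/eqP; rewrite eq_le; have /andP [b0 ->] := hab j.
rewrite andbT leNgt; apply/negP => ltba.
move: eq_ab; rewrite (bigD1 j) //= [X in _ = X](bigD1 j) //=.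
set ra := \prod_(i | i != j) a i; set rb := \prod_(i | i != j) b i.
have rb0 : 0 < rb.
  rewrite lt_def prodr_ge0 ?andbT => [|i _]; last by have /andP[] := hab i.
  by apply: contraTneq pb => rb0; rewrite (bigD1 j) //= -/rb rb0 mulr0 ltxx.
have rab : rb <= ra by apply: ler_prod => i _; exact: hab.
have : b j * rb < a j * ra.
  rewrite (lt_le_trans (y := a j * rb)) ?ltr_pM2r //.
  by rewrite ler_wpM2l // (le_trans b0) ?ltW.
by move=> + eq_ab; rewrite eq_ab ltxx.
Qed.

Lemma prod_le_sqr_midpoint n (l : 'I_n -> R) : (forall i, 0 <= l i) ->
  \prod_i l i <= (\prod_i ((1 + l i) / 2)) ^+ 2.
Proof.
move=> l0; rewrite -prodrXl; apply: ler_prod => i _; rewrite l0 /= -subr_ge0.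
by rewrite (_ : _ - _ = ((1 - l i) / 2) ^+ 2) ?sqr_ge0 //; field.
Qed.

Lemma sqr_midpoint_prod_eq n (l : 'I_n -> R) : (forall i, 0 <= l i) ->
  0 < \prod_i l i -> \prod_i l i = (\prod_i ((1 + l i) / 2)) ^+ 2 -> forall i, l i = 1.
Proof.
move=> l0 L0; rewrite -prodrXl => /esym eqL i.
have le_l j : 0 <= l j <= ((1 + l j) / 2) ^+ 2.
  rewrite l0 /= -subr_ge0.
  by rewrite (_ : _ - _ = ((1 - l j) / 2) ^+ 2) ?sqr_ge0 //; field.
have := eq_of_ler_prod le_l L0 eqL i.
move=> /(congr1 (fun x => x - l i)); rewrite subrr.
rewrite (_ : _ - _ = ((1 - l i) / 2) ^+ 2); last by field.
by move/eqP; rewrite sqrf_eq0 mulf_eq0 invr_eq0 pnatr_eq0 orbF subr_eq0 => /eqP <-.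
Qed.


Lemma det_one_add_joint_diag n (A1 A2 : 'M[R[i]]_n) (c : R) :
  psdmx A1 -> psdmx A2 -> 0 < c ->
  exists2 s : R, 0 < s & exists2 l : 'I_n -> R, (forall i, 0 <= l i) /\ 0 < \prod_i l i &
  [/\ \det (1%:M + c%:C *: A1) = s%:C,
      \det (1%:M + c%:C *: A2) = (\prod_i l i * s)%:C,
      \det (1%:M + c%:C *: (2^-1 *: (A1 + A2))) = (\prod_i ((1 + l i) / 2) * s)%:C &
      (forall i, l i = 1) -> A1 = A2].
Proof.
move=> pA1 pA2 c_gt0; have c_ge0 := ltW c_gt0.
(* Congruence by S maps 1 + c A1 to 1 and 1 + c A2 to K = V^H diag(l) V, and
   multiplies every determinant by the same factor (det S) (det S)^*. *)
set B1 := 1%:M + c%:C *: A1; set B2 := 1%:M + c%:C *: A2.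
have [S SB1] := psdmx_whiten pA1 c_ge0.
pose K := S *m B2 *m S^t*.
have pK : psdmx K.
  by apply: psdmx_congr; apply: psdmxD (psdmx1 _) (psdmxZ _ pA2); rewrite ler0c.
have [V Vu [l l0 KE]] := psdmx_spectral_real pK.
have [s s1 dB1] := det_one_add_psdmx pA1 c_ge0.
have [s2 s21 dB2'] := det_one_add_psdmx pA2 c_ge0.
have dB2 : \det B2 = (\prod_i l i * s)%:C.
  by rewrite (det_congr_normalized B2 SB1) -/K KE det_unitary_diagC // dB1 -rmorphM.
have s0 : 0 < s by apply: lt_le_trans s1.
exists s => //; exists l.
  split=> //; rewrite -(pmulr_lgt0 _ s0).
  by move: dB2; rewrite dB2' => /complexI <-; apply: lt_le_trans s21.
split=> //.
- have two : (2 : R[i]) != 0 by rewrite pnatr_eq0.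
  have -> : 1%:M + c%:C *: (2^-1 *: (A1 + A2)) = 2^-1 *: (B1 + B2).
    by apply/matrixP => i j; rewrite !mxE; field.
  have half : (2^-1 : R)%:C = 2^-1 by rewrite fmorphV rmorph_nat.
  rewrite (det_congr_normalized _ SB1).
  have -> : S *m (2^-1 *: (B1 + B2)) *m S^t* = (2^-1 : R)%:C%:M + (2^-1)%:C *: K.
    rewrite -scalemxAr -scalemxAl mulmxDr mulmxDl SB1 half.
    by rewrite scalerDr scale_scalar_mx mulr1.
  rewrite KE scalar_add_unitary_diagC //.
  rewrite det_unitary_diagC // dB1 -rmorphM; congr (_ * _)%:C.
  by apply: eq_bigr => i _; rewrite mulrDl mul1r mulrC.
- move=> l1; have K1 : K = 1%:M.
    rewrite KE (_ : diag_mx _ = 1%:M) ?mulmx1 ?unitarymx_adjK //.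
    by rewrite -diag_const_mx; congr diag_mx; apply/rowP => i; rewrite !mxE l1.
  have /addrI /scalerI -> // := congr_normalized_inj SB1 (etrans K1 (esym SB1)).
  by rewrite (inj_eq (@complexI _)) gt_eqF.
Qed.

Lemma lndet_midpoint n (A1 A2 : 'M[R[i]]_n) (c : R) :
  psdmx A1 -> psdmx A2 -> 0 < c ->
  lndet c A1 + lndet c A2 <= 2 * lndet c (2^-1 *: (A1 + A2)) /\
  (lndet c A1 + lndet c A2 = 2 * lndet c (2^-1 *: (A1 + A2)) -> A1 = A2).
Proof.
move=> pA1 pA2 c0.
have [s s0 [l [l0 L0] [dB1 dB2 dBm l1_eq]]] := det_one_add_joint_diag pA1 pA2 c0.
rewrite /lndet dB1 dB2 dBm /=.
set L := \prod_i l i in L0 l1_eq *; set Mm := \prod_i ((1 + l i) / 2).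
have Mm0 : 0 < Mm by apply: prodr_gt0 => i _; rewrite divr_gt0 // ltr_pwDl.
have lnMm : ln (Mm ^+ 2) = 2 * ln Mm by rewrite lnXn // mulr_natl.
have le_L : ln L <= 2 * ln Mm.
  by rewrite -lnMm ler_ln ?posrE ?exprn_gt0 // prod_le_sqr_midpoint.
rewrite !lnM ?posrE //; split=> [|eq_ln]; first lra.
have eqL : L = Mm ^+ 2 by apply: ln_inj; rewrite ?posrE ?exprn_gt0 // lnMm; lra.
exact/l1_eq/(sqr_midpoint_prod_eq l0 L0 eqL).
Qed.

End LogDet.

Section ComplexParts.
Context {R : realType}.
Implicit Types x y : R[i].

Lemma ReD x y : complex.Re (x + y) = complex.Re x + complex.Re y.
Proof. by case: x; case: y. Qed.

Lemma ImD x y : complex.Im (x + y) = complex.Im x + complex.Im y.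
Proof. by case: x; case: y. Qed.

Lemma ReM x y :
  complex.Re (x * y) = complex.Re x * complex.Re y - complex.Im x * complex.Im y.
Proof. by case: x; case: y. Qed.

Lemma ImM x y :
  complex.Im (x * y) = complex.Re x * complex.Im y + complex.Im x * complex.Re y.
Proof. by case: x => a b; case: y => c e /=; rewrite addrC. Qed.

Lemma Re_conj x : complex.Re (Num.conj x) = complex.Re x.
Proof. by case: x. Qed.

Lemma Im_conj x : complex.Im (Num.conj x) = - complex.Im x.
Proof. by case: x. Qed.

End ComplexParts.

Section ComplexMeasurability.
Context {d : measure_display} {T : measurableType d} {R : realType}.
Implicit Types F G : T -> R[i].

Definition cmeasurable F := measurable_fun setT (fun w => complex.Re (F w)) /\
  measurable_fun setT (fun w => complex.Im (F w)).

Lemma cmeasurable_cst (z : R[i]) : cmeasurable (fun _ => z).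
Proof. by split; apply: measurable_cst. Qed.

Lemma cmeasurableD F G :
  cmeasurable F -> cmeasurable G -> cmeasurable (fun w => F w + G w).
Proof.
move=> [F1 F2] [G1 G2]; split.
  by under eq_fun do rewrite ReD; apply: measurable_funD.
by under eq_fun do rewrite ImD; apply: measurable_funD.
Qed.

Lemma cmeasurableM F G :
  cmeasurable F -> cmeasurable G -> cmeasurable (fun w => F w * G w).
Proof.
move=> [F1 F2] [G1 G2]; split.
  by under eq_fun do rewrite ReM; apply: measurable_funB; apply: measurable_funM.
by under eq_fun do rewrite ImM; apply: measurable_funD; apply: measurable_funM.
Qed.

Lemma cmeasurable_conj F : cmeasurable F -> cmeasurable (fun w => Num.conj (F w)).
Proof.
move=> [F1 F2]; split; first by under eq_fun do rewrite Re_conj.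
by under eq_fun do rewrite Im_conj; apply: measurableT_comp.
Qed.

Lemma cmeasurable_sum (I : Type) (s : seq I) (P : pred I) (F : I -> T -> R[i]) :
  (forall i, cmeasurable (F i)) -> cmeasurable (fun w => \sum_(i <- s | P i) F i w).
Proof.
move=> mF; elim: s => [|a s IH].
  by under eq_fun do rewrite big_nil; apply: cmeasurable_cst.
by under eq_fun do rewrite big_cons; case: (P a) => //; apply: cmeasurableD.
Qed.

Lemma cmeasurable_prod (I : Type) (s : seq I) (P : pred I) (F : I -> T -> R[i]) :
  (forall i, cmeasurable (F i)) -> cmeasurable (fun w => \prod_(i <- s | P i) F i w).
Proof.
move=> mF; elim: s => [|a s IH].
  by under eq_fun do rewrite big_nil; apply: cmeasurable_cst.
by under eq_fun do rewrite big_cons; case: (P a) => //; apply: cmeasurableM.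
Qed.

Definition mx_cmeasurable m n (A : T -> 'M[R[i]]_(m, n)) :=
  forall i j, cmeasurable (fun w => A w i j).

Lemma mx_cmeasurable_cst m n (A : 'M[R[i]]_(m, n)) : mx_cmeasurable (fun _ => A).
Proof. by move=> i j; apply: cmeasurable_cst. Qed.

Lemma mx_cmeasurableD m n (A B : T -> 'M[R[i]]_(m, n)) :
  mx_cmeasurable A -> mx_cmeasurable B -> mx_cmeasurable (fun w => A w + B w).
Proof. by move=> mA mB i j; under eq_fun do rewrite mxE; apply: cmeasurableD. Qed.

Lemma mx_cmeasurableZ m n (a : R[i]) (A : T -> 'M[R[i]]_(m, n)) :
  mx_cmeasurable A -> mx_cmeasurable (fun w => a *: A w).
Proof.
move=> mA i j; under eq_fun do rewrite mxE.
by apply: cmeasurableM => //; apply: cmeasurable_cst.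
Qed.

Lemma mx_cmeasurableM m n p (A : T -> 'M[R[i]]_(m, n)) (B : T -> 'M[R[i]]_(n, p)) :
  mx_cmeasurable A -> mx_cmeasurable B -> mx_cmeasurable (fun w => A w *m B w).
Proof.
move=> mA mB i j; under eq_fun do rewrite mxE.
by apply: cmeasurable_sum => k; apply: cmeasurableM.
Qed.

Lemma mx_cmeasurable_adj m n (A : T -> 'M[R[i]]_(m, n)) :
  mx_cmeasurable A -> mx_cmeasurable (fun w => adjmx (A w)).
Proof. by move=> mA i j; under eq_fun do rewrite !mxE; apply: cmeasurable_conj. Qed.

Lemma cmeasurable_det n (A : T -> 'M[R[i]]_n) :
  mx_cmeasurable A -> cmeasurable (fun w => \det (A w)).
Proof.
move=> mA; apply: cmeasurable_sum => s.
by apply: cmeasurableM; [apply: cmeasurable_cst | apply: cmeasurable_prod].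
Qed.

Lemma measurable_lndet n (c : R) (A : T -> 'M[R[i]]_n) :
  mx_cmeasurable A -> measurable_fun setT (fun w => lndet c (A w)).
Proof.
move=> mA; apply: measurableT_comp; first exact: measurable_ln.
have [] // := @cmeasurable_det _ (fun w => 1%:M + c%:C *: A w).
by apply: mx_cmeasurableD; [apply: mx_cmeasurable_cst | apply: mx_cmeasurableZ].
Qed.

End ComplexMeasurability.

Section RealIntegrability.
Context {d : measure_display} {T : measurableType d} {R : realType}.
Variable mu : {measure set T -> \bar R}.
Local Notation integrable f := (mu.-integrable setT (EFin \o f)).

Lemma integrableRD (f g : T -> R) :
  integrable f -> integrable g -> integrable (fun w => f w + g w).
Proof. by move=> If Ig; apply: eq_integrable (integrableD _ If Ig). Qed.

Lemma integrableRB (f g : T -> R) :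
  integrable f -> integrable g -> integrable (fun w => f w - g w).
Proof. by move=> If Ig; apply: eq_integrable (integrableB _ If Ig). Qed.

Lemma integrableRZl (k : R) (f : T -> R) :
  integrable f -> integrable (fun w => k * f w).
Proof. by move=> If; apply: eq_integrable (integrableZl _ k If). Qed.

Definition cintegrable (F : T -> R[i]) :=
  integrable (fun w => complex.Re (F w)) /\ integrable (fun w => complex.Im (F w)).

Lemma cintegrableD (F G : T -> R[i]) :
  cintegrable F -> cintegrable G -> cintegrable (fun w => F w + G w).
Proof.
move=> [F1 F2] [G1 G2]; split.
  by under eq_fun do rewrite ReD; apply: integrableRD.
by under eq_fun do rewrite ImD; apply: integrableRD.
Qed.

Lemma cintegrableZ (q : R[i]) (F : T -> R[i]) :
  cintegrable F -> cintegrable (fun w => q * F w).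
Proof.
move=> [F1 F2]; split.
  by under eq_fun do rewrite ReM; apply: integrableRB; apply: integrableRZl.
by under eq_fun do rewrite ImM; apply: integrableRD; apply: integrableRZl.
Qed.

Lemma cintegrable_sum (I : Type) (s : seq I) (F : I -> T -> R[i]) :
  (forall i, cintegrable (F i)) -> cintegrable (fun w => \sum_(i <- s) F i w).
Proof.
move=> iF; elim: s => [|a s IH].
  by under eq_fun do rewrite big_nil; split; apply: integrable0.
by under eq_fun do rewrite big_cons; apply: cintegrableD.
Qed.

Lemma integral_twice_subB (f f1 f2 : T -> R) :
  integrable f -> integrable f1 -> integrable f2 ->
  (\int[mu]_w (2 * f w - f1 w - f2 w)%:E =
   2%:E * \int[mu]_w (f w)%:E - \int[mu]_w (f1 w)%:E - \int[mu]_w (f2 w)%:E)%E.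
Proof.
move=> If If1 If2; have If' := integrableZl measurableT 2 If.
transitivity (\int[mu]_w (2%:E * (f w)%:E - (f1 w)%:E - (f2 w)%:E))%E.
  by apply: eq_integral => w _; rewrite -EFinM -!EFinB.
rewrite integralB //; last exact: integrableB.
by rewrite integralB // integralZl.
Qed.

Lemma ae_eq0_of_integral_le0 (g : T -> R) : integrable g -> (forall w, 0 <= g w) ->
  (\int[mu]_w (g w)%:E <= 0)%E -> {ae mu, forall w, g w = 0}.
Proof.
move=> Ig g0 Ig0.
have /(ae_eq_integral_abs mu measurableT (measurable_int mu Ig)).1 :
    (\int[mu]_w `|(g w)%:E| = 0)%E.
  apply/eqP; rewrite eq_le integral_ge0 ?andbT //.
  by under eq_integral do rewrite abse_EFin ger0_norm //.
by apply: filterS => w /(_ I) [].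
Qed.

Lemma ae_eq_of_lndet_midpoint_le n (c : R) (X1 X2 Xm : T -> 'M[R[i]]_n) :
  0 < c -> (forall w, psdmx (X1 w)) -> (forall w, psdmx (X2 w)) ->
  (forall w, Xm w = 2^-1 *: (X1 w + X2 w)) ->
  integrable (fun w => lndet c (X1 w)) -> integrable (fun w => lndet c (X2 w)) ->
  integrable (fun w => lndet c (Xm w)) ->
  (\int[mu]_w (lndet c (Xm w))%:E <= \int[mu]_w (lndet c (X1 w))%:E)%E ->
  (\int[mu]_w (lndet c (Xm w))%:E <= \int[mu]_w (lndet c (X2 w))%:E)%E ->
  {ae mu, forall w, X1 w = X2 w}.
Proof.
move=> c0 pX1 pX2 XmE I1 I2 Im le1 le2.
have gap w : lndet c (X1 w) + lndet c (X2 w) <= 2 * lndet c (Xm w) /\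
    (lndet c (X1 w) + lndet c (X2 w) = 2 * lndet c (Xm w) -> X1 w = X2 w).
  by rewrite XmE; apply: lndet_midpoint.
pose g w := 2 * lndet c (Xm w) - lndet c (X1 w) - lndet c (X2 w).
have Ig : integrable g by do 2 apply: integrableRB => //; apply: integrableRZl.
have g0 w : 0 <= g w by rewrite /g -addrA -opprD subr_ge0; case: (gap w).
have Ig0 : (\int[mu]_w (g w)%:E <= 0)%E.
  have fin_twice_subB (x y z : \bar R) : x \is a fin_num -> y \is a fin_num ->
      z \is a fin_num -> (x <= y -> x <= z -> 2%:E * x - y - z <= 0)%E.
    case: x => // x _; case: y => // y _; case: z => // z _.
    by rewrite !lee_fin /= => xy xz; lra.
  rewrite /g (integral_twice_subB Im I1 I2).
  exact: fin_twice_subB (integrable_fin_num measurableT Im)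
    (integrable_fin_num measurableT I1) (integrable_fin_num measurableT I2) le1 le2.
apply: filterS (ae_eq0_of_integral_le0 Ig g0 Ig0) => w gw0.
apply: (gap w).2; apply/eqP; rewrite eq_sym -subr_eq0 opprD addrA; exact/eqP.
Qed.

End RealIntegrability.

Section Capacity.
Context {d : measure_display} {T : measurableType d} {R : realType}.
Variables (P : probability T R) (M N : nat) (H : T -> 'M[R[i]]_(M, N)).

Lemma capacityE (sigma2 : R) (Q : 'M[R[i]]_N) :
  capacity P H sigma2 Q =
  (\int[P]_w (lndet sigma2^-1 (H w *m Q *m adjmx (H w)))%:E)%E.
Proof. by rewrite /capacity expectation.unlock. Qed.

Hypothesis H_meas : mx_cmeasurable H.
Hypothesis H_mom :
  forall i j k, cintegrable P (fun w => H w i j * Num.conj (H w i k)).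

Lemma integrable_lndet_HQH (c : R) (Q : 'M[R[i]]_N) : psdmx Q -> 0 <= c ->
  P.-integrable setT (EFin \o (fun w => lndet c (H w *m Q *m adjmx (H w)))).
Proof.
move=> pQ c0; have pX w := psdmx_congr (H w) pQ.
have [Itr _] : cintegrable P (fun w => \tr (H w *m Q *m adjmx (H w))).
  under eq_fun do rewrite mxtrace_congrE.
  by do 3 apply: cintegrable_sum => ?; apply: cintegrableZ.
have cItr := integrableRZl c Itr.
apply: (le_integrable measurableT _ _ cItr).
  apply/measurable_EFinP; apply: measurable_lndet.
  apply: mx_cmeasurableM (mx_cmeasurable_adj H_meas).
  exact: mx_cmeasurableM H_meas (mx_cmeasurable_cst Q).
move=> w _ /=; rewrite lee_fin ger0_norm ?lndet_ge0 //.
exact: le_trans (lndet_le_tr _ _) (ler_norm _).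
Qed.

End Capacity.

Theorem lemma2 (R : realType) (d : measure_display) (T : measurableType d)
  (P : probability T R) (M N : nat) (sigma2 p : R)
  (Sigma : 'M[R[i]]_(M * N)) (H : T -> 'M[R[i]]_(M, N))
  (Q1 Q2 : 'M[R[i]]_N) :
  (0 < M)%N -> (0 < N)%N -> 0 < sigma2 -> 0 < p ->
  cgaussian_mx P H Sigma ->
  capacity_achieving P H sigma2 p Q1 ->
  capacity_achieving P H sigma2 p Q2 ->
  \tr Q1 = p%:C -> \tr Q2 = p%:C ->
  {ae P, forall w, H w *m Q1 *m adjmx (H w) = H w *m Q2 *m adjmx (H w)}.
Proof.
move=> _ _ s0 _ [mRe mIm _ _ Hcov] [pQ1 _ opt1] [pQ2 _ opt2] tr1 tr2.
have mH : mx_cmeasurable H by move=> i j; split; [exact: mRe | exact: mIm].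
have Hmom i j k : cintegrable P (fun w => H w i j * Num.conj (H w i k)).
  by have [] := Hcov i j i k.
pose Q := 2^-1 *: (Q1 + Q2).
have pQ : psdmx Q by apply: psdmxZ (psdmxD pQ1 pQ2); rewrite invr_ge0 ler0n.
have trQ : \tr Q <= p%:C.
  have two : (2 : R[i]) != 0 by rewrite pnatr_eq0.
  suff -> : \tr Q = p%:C by rewrite lexx.
  by rewrite mxtraceZ mxtraceD tr1 tr2; field.
have HQ w : H w *m Q *m adjmx (H w) =
    2^-1 *: (H w *m Q1 *m adjmx (H w) + H w *m Q2 *m adjmx (H w)).
  by rewrite -scalemxAr -scalemxAl mulmxDr mulmxDl.
have c_gt0 : 0 < sigma2^-1 by rewrite invr_gt0.
have c_ge0 := ltW c_gt0.
apply: (ae_eq_of_lndet_midpoint_le c_gt0 _ _ HQ).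
- by move=> w; apply: psdmx_congr.
- by move=> w; apply: psdmx_congr.
- exact (integrable_lndet_HQH mH Hmom pQ1 c_ge0).
- exact (integrable_lndet_HQH mH Hmom pQ2 c_ge0).
- exact (integrable_lndet_HQH mH Hmom pQ c_ge0).
- by have := opt1 Q pQ trQ; rewrite !capacityE.
- by have := opt2 Q pQ trQ; rewrite !capacityE.
Qed.
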